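(* In $NOM$, writing $\phi\vee\psi$ for $\neg(\neg\phi\wedge\neg\psi)$ and $\phi\perp\!\!\!\perp\psi$ for $(\phi\rightarrow(\psi\rightarrow\phi))\wedge(\psi\rightarrow(\phi\rightarrow\psi))$, the following rules are derivable for every finite sequence $\Gamma$ and formulas $\phi,\psi$: from $\Gamma\vdash\phi\perp\!\!\!\perp\psi$ infer $\Gamma,\phi\vdash(\phi\wedge\psi)\vee(\phi\wedge\neg\psi)$; and from $\Gamma\vdash\phi\perp\!\!\!\perp\psi$ infer $\Gamma\vdash((\phi\wedge\psi)\vee(\phi\wedge\neg\psi))\vee((\neg\phi\wedge\psi)\vee(\neg\phi\wedge\neg\psi))$.
   Context: The propositional deductive system $NOM$: formulas are built from propositional letters using $\wedge$, $\rightarrow$, $\neg$. Sequents are $\phi_1,\ldots,\phi_n\vdash\psi$ ($n\ge0$) with antecedent a finite ordered sequence. With $\Gamma$ a finite possibly empty sequence of formulas and $\phi,\psi,\chi$ formulas, the rules of $NOM$ are: (assumption) $\Gamma,\phi\vdash\phi$; (cut) $\Gamma\vdash\phi$, $\Gamma,\phi\vdash\psi$ $\Rightarrow$ $\Gamma\vdash\psi$; (paste) $\Gamma\vdash\phi$, $\Gamma\vdash\psi$ $\Rightarrow$ $\Gamma,\phi\vdash\psi$; (compatible exchange) $\Gamma,\phi,\psi\vdash\phi$, $\Gamma,\phi,\psi\vdash\chi$, $\Gamma,\psi,\phi\vdash\psi$ $\Rightarrow$ $\Gamma,\psi,\phi\vdash\chi$; ($\wedge$-intro) $\Gamma\vdash\phi$,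 $\Gamma\vdash\psi$ $\Rightarrow$ $\Gamma\vdash\phi\wedge\psi$; ($\wedge$-elim) $\Gamma\vdash\phi\wedge\psi$ $\Rightarrow$ $\Gamma\vdash\phi$ and $\Rightarrow$ $\Gamma\vdash\psi$; ($\rightarrow$-intro) $\Gamma,\phi\vdash\psi$ $\Rightarrow$ $\Gamma\vdash\phi\rightarrow\psi$; ($\rightarrow$-elim) $\Gamma\vdash\phi\rightarrow\psi$ $\Rightarrow$ $\Gamma,\phi\vdash\psi$; (excluded middle) $\Gamma,\phi\vdash\psi$, $\Gamma,\neg\phi\vdash\psi$ $\Rightarrow$ $\Gamma\vdash\psi$; (explosion) $\Gamma\vdash\neg\phi$ $\Rightarrow$ $\Gamma,\phi\vdash\psi$. A rule schema is derivable if in every instance its conclusion can be derived from its premises using these rules. *)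

From Stdlib Require Import List.
Import ListNotations.

Inductive formula : Type :=
| Var : nat -> formula
| And : formula -> formula -> formula
| Imp : formula -> formula -> formula
| Neg : formula -> formula.

Definition Or (p q : formula) : formula := Neg (And (Neg p) (Neg q)).
Definition Indep (p q : formula) : formula :=
  And (Imp p (Imp q p)) (Imp q (Imp p q)).

(* A sequent Gamma |- psi; the antecedent is a list, and "Gamma, phi" is
   Gamma ++ [phi] (phi appended at the right end). *)

(* [NOM Hyp G s]: the sequent G |- s is derivable in NOM from the extra
   premise sequents collected in Hyp (used to express derivability of rules). *)
Inductive NOM (Hyp : list formula -> formula -> Prop) : list formula -> formula -> Prop :=
| n_prem : forall G s, Hyp G s -> NOM Hyp G s
| n_assum : forall G p, NOM Hyp (G ++ [p]) p
| n_cut : forall G p q, NOM Hyp G p -> NOM Hyp (G ++ [p]) q -> NOM Hyp G q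
| n_paste : forall G p q, NOM Hyp G p -> NOM Hyp G q -> NOM Hyp (G ++ [p]) q
| n_cexch : forall G p q r,
    NOM Hyp (G ++ [p; q]) p -> NOM Hyp (G ++ [p; q]) r -> NOM Hyp (G ++ [q; p]) q ->
    NOM Hyp (G ++ [q; p]) r
| n_andI : forall G p q, NOM Hyp G p -> NOM Hyp G q -> NOM Hyp G (And p q)
| n_andE1 : forall G p q, NOM Hyp G (And p q) -> NOM Hyp G p
| n_andE2 : forall G p q, NOM Hyp G (And p q) -> NOM Hyp G q
| n_impI : forall G p q, NOM Hyp (G ++ [p]) q -> NOM Hyp G (Imp p q)
| n_impE : forall G p q, NOM Hyp G (Imp p q) -> NOM Hyp (G ++ [p]) q
| n_em : forall G p q, NOM Hyp (G ++ [p]) q -> NOM Hyp (G ++ [Neg p]) q -> NOM Hyp G q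
| n_expl : forall G p q, NOM Hyp G (Neg p) -> NOM Hyp (G ++ [p]) q.

Definition derivable_rule (G1 : list formula) (s1 : formula)
  (G2 : list formula) (s2 : formula) : Prop :=
  NOM (fun G s => G = G1 /\ s = s1) G2 s2.

From Stdlib Require Import List.
Import ListNotations.

(* The engine is the persistence lemma [persist_Neg]: if y holds under G and
   survives learning q, it also survives learning ~q.  To see it, put
   a := q /\ y.  Under G the Sasaki implication ~q \/ a holds, which makes
   ~q and ~a interchangeable as the next hypothesis; and y, being entailed by
   a, survives learning ~a.  Independence of p and q says that p survives
   learning q and q survives learning p.  Persistence lets p survive ~q; it
   also lets the implication q -> p -> p /\ q survive ~p, so that ~p survives
   q, and then ~q.  Excluded middle on p and q yields the disjunctions. *)

Section Derived_rules.

Variable Hyp : list formula -> formula -> Prop.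

Local Notation "G ⊢ s" := (NOM Hyp G s) (at level 70).

Definition entails (W X : formula) : Prop := forall D, D ++ [W] ⊢ X.

Lemma cexch_app G p q r :
  (G ++ [p]) ++ [q] ⊢ p -> (G ++ [p]) ++ [q] ⊢ r ->
  (G ++ [q]) ++ [p] ⊢ q -> (G ++ [q]) ++ [p] ⊢ r.
Proof. rewrite <- !app_assoc; simpl; apply n_cexch. Qed.

Lemma Neg_NegE G A : G ⊢ Neg (Neg A) -> G ⊢ A.
Proof.
  intro h. apply n_em with A.
  - apply n_assum.
  - apply n_expl, h.
Qed.

Lemma Neg_NegI G A : G ⊢ A -> G ⊢ Neg (Neg A).
Proof.
  intro h. apply n_cut with A; [exact h |]. apply n_impE.
  apply n_em with (Neg A); apply n_impI.
  - apply n_expl, n_assum.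
  - apply n_paste; [apply Neg_NegE, n_assum | apply n_assum].
Qed.

Lemma NOM_absurd G A r : G ⊢ A -> G ⊢ Neg A -> G ⊢ r.
Proof. intros hA hnA. apply n_cut with A; [exact hA |]. apply n_expl, hnA. Qed.

Lemma NegI_self G C : G ++ [C] ⊢ Neg C -> G ⊢ Neg C.
Proof. intro h. apply n_em with C; [exact h | apply n_assum]. Qed.

Lemma NegI G X C : G ⊢ Neg X -> G ++ [C] ⊢ X -> G ⊢ Neg C.
Proof.
  intros hnX hX. apply NegI_self, n_cut with X; [exact hX |].
  (* G, X is inconsistent, so X may be exchanged with C. *)
  apply cexch_app; try (apply n_expl, n_expl, hnX).
  apply n_paste; [exact hX | apply n_assum].
Qed.

Lemma OrIl G A B : G ⊢ A -> G ⊢ Or A B.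
Proof.
  intro h. apply NegI with (Neg A); [apply Neg_NegI, h |].
  eapply n_andE1, n_assum.
Qed.

Lemma OrIr G A B : G ⊢ B -> G ⊢ Or A B.
Proof.
  intro h. apply NegI with (Neg B); [apply Neg_NegI, h |].
  eapply n_andE2, n_assum.
Qed.

Lemma insert_derivable G a x y :
  G ⊢ a -> (G ++ [a]) ++ [x] ⊢ y -> G ++ [x] ⊢ y.
Proof. intros ha h. apply n_impE, n_cut with a; [exact ha |]. apply n_impI, h. Qed.

Lemma replace_last G x z y :
  G ++ [x] ⊢ z -> G ++ [z] ⊢ x -> G ++ [z] ⊢ y -> G ++ [x] ⊢ y.
Proof.
  intros hxz hzx hzy. apply n_cut with z; [exact hxz |].
  apply cexch_app.
  - apply n_paste; [exact hzx | apply n_assum].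
  - apply n_paste; [exact hzx | exact hzy].
  - apply n_paste; [exact hxz | apply n_assum].
Qed.

Lemma persist_past_Neg G W X : entails W X -> G ⊢ X -> G ++ [Neg W] ⊢ X.
Proof.
  intros hWX hX. apply insert_derivable with X; [exact hX |].
  apply n_em with (Neg X).
  - apply cexch_app; try (apply n_expl, n_expl, Neg_NegI, n_assum).
    apply NegI with X; [apply n_assum | apply hWX].
  - apply Neg_NegE, n_assum.
Qed.

Lemma Neg_persist G W V : entails W V -> G ⊢ Neg W -> G ++ [V] ⊢ Neg W.
Proof.
  intros hWV hnW. apply insert_derivable with (Neg W); [exact hnW |].
  apply n_em with W; [| apply n_assum].
  apply cexch_app; try (apply n_expl, n_expl, n_assum).
  apply hWV.
Qed.

(* Disjunctive syllogism, valid when the disjuncts are orthogonal. *)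
Lemma Or_resolve G x z : entails z (Neg x) -> G ⊢ Or x z -> G ++ [Neg z] ⊢ x.
Proof.
  intros hz h. apply Neg_NegE, NegI with (And (Neg x) (Neg z)).
  - apply persist_past_Neg; [| exact h].
    intro D. apply OrIr, n_assum.
  - apply n_andI; [apply n_assum |].
    apply Neg_persist; [exact hz | apply n_assum].
Qed.

Definition sasaki_imp (q y : formula) : formula := Or (Neg q) (And q y).

Lemma sasaki_impI G q y : G ++ [q] ⊢ y -> G ⊢ sasaki_imp q y.
Proof.
  intro h. apply n_em with q.
  - apply OrIr, n_andI; [apply n_assum | exact h].
  - apply OrIl, n_assum.
Qed.

Lemma persist_Neg G q y : G ⊢ y -> G ++ [q] ⊢ y -> G ++ [Neg q] ⊢ y.
Proof.
  intros hy hqy. set (a := And q y).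
  assert (nq_na : G ++ [Neg q] ⊢ Neg a).
  { apply NegI with q; [apply n_assum |]. eapply n_andE1, n_assum. }
  assert (na_nq : G ++ [Neg a] ⊢ Neg q).
  { apply Or_resolve; [| apply sasaki_impI, hqy].
    intro D. apply Neg_NegI. eapply n_andE1, n_assum. }
  assert (na_y : G ++ [Neg a] ⊢ y).
  { apply persist_past_Neg; [| exact hy]. intro D. eapply n_andE2, n_assum. }
  exact (replace_last _ _ _ _ nq_na na_nq na_y).
Qed.

Lemma Neg_persist_compatible G p q :
  (G ++ [p]) ++ [q] ⊢ p -> (G ++ [q]) ++ [p] ⊢ q ->
  (G ++ [Neg p]) ++ [q] ⊢ Neg p.
Proof.
  intros hpq hqp. set (a := And p q).
  assert (r : G ++ [Neg p] ⊢ Imp q (Imp p a)).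
  { apply persist_Neg; apply n_impI, n_impI.
    - apply n_andI; [apply n_assum | exact hqp].
    - apply n_paste; [exact hpq |]. apply n_andI; [exact hpq | apply n_assum]. }
  assert (na : G ++ [Neg p] ⊢ Neg a).
  { apply NegI with p; [apply n_assum |]. eapply n_andE1, n_assum. }
  apply NegI_self, NOM_absurd with a.
  - apply n_impE, n_impE, r.
  - apply Neg_persist; [intro D; eapply n_andE1, n_assum |].
    apply Neg_persist; [intro D; eapply n_andE2, n_assum | exact na].
Qed.

Lemma Or_split G x q :
  (G ++ [x]) ++ [q] ⊢ x -> G ++ [x] ⊢ Or (And x q) (And x (Neg q)).
Proof.
  intro h. apply n_em with q.
  - apply OrIl, n_andI; [exact h | apply n_assum].
  - apply OrIr, n_andI; [apply persist_Neg; [apply n_assum | exact h] | apply n_assum].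
Qed.

End Derived_rules.

Theorem proposition4p11 : forall (G : list formula) (p q : formula),
  derivable_rule G (Indep p q)
    (G ++ [p]) (Or (And p q) (And p (Neg q)))
  /\
  derivable_rule G (Indep p q)
    G (Or (Or (And p q) (And p (Neg q)))
          (Or (And (Neg p) q) (And (Neg p) (Neg q)))).
Proof.
  intros G p q. unfold derivable_rule.
  set (Hyp := fun G0 s => G0 = G /\ s = Indep p q).
  assert (indep : NOM Hyp G (Indep p q)) by (apply n_prem; split; reflexivity).
  assert (hpq : NOM Hyp ((G ++ [p]) ++ [q]) p).
  { apply n_impE, n_impE. eapply n_andE1, indep. }
  assert (hqp : NOM Hyp ((G ++ [q]) ++ [p]) q).
  { apply n_impE, n_impE. eapply n_andE2, indep. }
  split; [apply Or_split, hpq |].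
  apply n_em with p.
  - apply OrIl, Or_split, hpq.
  - apply OrIr, Or_split, Neg_persist_compatible; [exact hpq | exact hqp].
Qed.
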